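(* Let $n$ be a positive integer and let $T$ be a strongly connected tournament on $n$ vertices which is not isomorphic to $D_n$, and let $k>1$ be an integer. Then $P(T;k)<P(D_n;k)$. Here $D_n$ is the tournament on $\{v_1,\ldots,v_n\}$ in which, for $1\le i<j\le n$ with $(i,j)\ne(1,n)$, the edge between $v_i$ and $v_j$ is directed from $v_i$ to $v_j$, and the edge between $v_1$ and $v_n$ is directed from $v_n$ to $v_1$.
   Context: A tournament is an orientation of a complete graph; it is strongly connected if for any two vertices there is a directed path from each to the other. For a positive integer $k$, a proper $k$-coloring of a digraph $D$ is a map $c:V(D)\to\{1,\ldots,k\}$ such that each color class induces a subdigraph with no directed cycle; $P(D;k)$ denotes the number of proper $k$-colorings of $D$. *)

From mathcomp Require Import all_boot.
Set Implicit Arguments. Unset Strict Implicit. Unset Printing Implicit Defensive.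

(* A digraph on a finite vertex type V is a relation E : rel V (E x y = arc x -> y). *)

Definition is_tournament (V : finType) (E : rel V) : Prop :=
  (forall x, ~~ E x x) /\ (forall x y, x != y -> (E x y (+) E y x)).

Definition strongly_connected (V : finType) (E : rel V) : Prop :=
  forall x y, connect E x y.

Definition has_dicycle_inb (V : finType) (E : rel V) (A : {set V}) : bool :=
  [exists x, exists y, [&& x \in A, y \in A, E x y &
                  connect (fun a b => E a b && (a \in A) && (b \in A)) y x]].

Definition proper_coloringb (V : finType) (E : rel V) (k : nat) (c : {ffun V -> 'I_k}) : bool :=
  [forall i : 'I_k, ~~ has_dicycle_inb E [set v | c v == i]].

Definition chrom_poly (V : finType) (E : rel V) (k : nat) : nat :=
  #|[set c : {ffun V -> 'I_k} | proper_coloringb E c]|.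

(* D_n on vertices 'I_n (v_{i+1} <-> i): for i < j, i -> j except the pair
   (0, n-1), which is oriented n-1 -> 0. *)

Definition Dn (n : nat) : rel 'I_n :=
  fun i j => ((i < j) && ~~ ((i == 0 :> nat) && (j == n.-1 :> nat)))
          || [&& (i == n.-1 :> nat), (j == 0 :> nat) & (0 < n.-1)].

Definition digraph_iso (V W : finType) (E : rel V) (F : rel W) : Prop :=
  exists f : V -> W, bijective f /\ forall x y, E x y = F (f x) (f y).
Arguments Dn n i j : clear implicits.

(* It suffices to show that more colourings of [T] contain a monochromatic directed
   triangle than colourings of [D_n] are improper.  By Moon's theorem a strong tournament on at
   least four vertices has a vertex [v] whose deletion leaves it strong, and [v] lies on a
   triangle [v -> p -> q -> v] of the rest.  Adding [v] back makes monochromatic every colouring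
   with [c v = c p = c q]; as the old monochromatic colourings do not depend on [c v], induction
   gives at least [k^(n-1) - k (k-1)^(n-2)] colourings of [T] with a monochromatic triangle.  The
   improper colourings of [D_n] are those with [c v_1 = c v_n = c v_j] for some [1 < j < n], and
   there are exactly that many.  At the last step the bound is strict as soon as a colouring with
   a monochromatic triangle in [T - v] separates [p] from [q]; if no triangle of [T - v] allows
   this, all of them go through one arc [a -> b], and then [T] is isomorphic to [D_n]. *)

From mathcomp Require Import all_boot zify.
From Stdlib Require Import Lia.
Set Implicit Arguments. Unset Strict Implicit. Unset Printing Implicit Defensive.

Lemma connect_exit (V : finType) (e : rel V) (X : pred V) x y :
  connect e x y -> X x -> ~~ X y -> exists u v, [/\ X u, ~~ X v & e u v].
Proof.
case/connectP=> p + ->; elim: p x => [|z p IH] x /=; first by move=> _ ->.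
case/andP=> exz pz Xx Ny; case Xz: (X z); first exact: IH Xz Ny.
by exists x, z; rewrite Xz.
Qed.

Lemma rank_acyclic (V : finType) (e : rel V) (r : V -> nat) x y :
  (forall u v, e u v -> r u < r v) -> e x y -> ~~ connect e y x.
Proof.
move=> incr /incr rxy; apply/negP => /connect_exit exit.
have [||u [v [/= ryu ryv /incr ruv]]] := exit [pred u | r y <= r u]; rewrite /= ?leqnn -?ltnNge //.
by rewrite (leq_trans ryu (ltnW ruv)) in ryv.
Qed.

Lemma set_other (V : finType) (A : {set V}) v : v \in A -> 1 < #|A| -> exists2 w, w \in A & w != v.
Proof. by move=> vA; rewrite (cardsD1 v A) vA ltnS => /card_gt0P[w /setD1P[wv wA]]; exists w. Qed.

(** * Strong subtournaments *)

Section Tournament.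

Variables (V : finType) (T : rel V).
Hypothesis tourT : is_tournament T.

Lemma tournament_irrefl x : T x x = false.
Proof. exact/negbTE/tourT.1. Qed.

Lemma tournament_neq x y : T x y -> x != y.
Proof. by apply: contraTneq => ->; rewrite tournament_irrefl. Qed.

Lemma tournament_asym x y : T x y -> T y x = false.
Proof. by move=> Txy; have := tourT.2 x y (tournament_neq Txy); rewrite Txy => /negbTE. Qed.

Lemma tournament_total x y : x != y -> T x y = ~~ T y x.
Proof. by move/(tourT.2 x y); case: (T x y); case: (T y x). Qed.

Definition triangle x y z := [&& T x y, T y z & T z x].

Lemma triangle_rot x y z : triangle x y z = triangle y z x.
Proof. by rewrite /triangle; case: (T x y); case: (T y z); case: (T z x). Qed.

Lemma triangle_neq x y z : triangle x y z -> [/\ x != y, y != z & z != x].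
Proof. by case/and3P=> Txy Tyz Tzx; rewrite !tournament_neq. Qed.

Definition induced (A : {set V}) : rel V := fun x y => T x y && (x \in A) && (y \in A).

Definition strong_on (A : {set V}) :=
  forall x y, x \in A -> y \in A -> connect (induced A) x y.

Lemma connect_induced1 (A : {set V}) x y :
  T x y -> x \in A -> y \in A -> connect (induced A) x y.
Proof. by move=> Txy xA yA; apply: connect1; rewrite /induced Txy xA yA. Qed.

Lemma strong_onT : strongly_connected T -> strong_on setT.
Proof.
by move=> sT x y _ _; rewrite (@eq_connect _ _ T) // => u v; rewrite /induced !inE !andbT.
Qed.

Lemma strong_on_exit (A : {set V}) (X : pred V) x y :
  strong_on A -> x \in A -> y \in A -> X x -> ~~ X y ->
  exists u v, [/\ u \in A, v \in A, X u, ~~ X v & T u v].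
Proof.
move=> sA xA yA Xx Ny.
by have [u [v [Xu Nv /andP[/andP[Tuv uA] vA]]]] := connect_exit (sA x y xA yA) Xx Ny; exists u, v.
Qed.

Lemma strong_on_triangle (A : {set V}) v w :
  strong_on A -> v \in A -> w \in A -> w != v ->
  exists p q, [/\ p \in A, q \in A & triangle v p q].
Proof.
move=> sA vA wA wv.
have [_ [p [_ pA /eqP-> pv Tvp]]] := strong_on_exit (X := pred1 v) sA vA wA (eqxx v) wv.
have nv : ~~ predC1 v v by rewrite /= eqxx.
have [q [_ [qA _ qv /negPn/eqP-> Tqv]]] := strong_on_exit sA wA vA wv nv.
have [p' [q' [p'A q'A Tvp' Tvq' Tp'q']]] :=
  strong_on_exit (X := T v) sA pA qA Tvp (negbT (tournament_asym Tqv)).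
exists p', q'; split=> //; rewrite /triangle Tvp' Tp'q' tournament_total ?Tvq' //.
by apply: contraTneq Tp'q' => ->; rewrite tournament_asym.
Qed.

Lemma strong_on_hub (A : {set V}) h :
  (forall u, u \in A -> connect (induced A) u h) ->
  (forall u, u \in A -> connect (induced A) h u) -> strong_on A.
Proof. by move=> toh fromh x y xA yA; apply: connect_trans (toh x xA) (fromh y yA). Qed.

Lemma strong_on_triangle_set x y z : triangle x y z -> strong_on [set x; y; z].
Proof.
case/and3P=> Txy Tyz Tzx; have arc := @connect_induced1 [set x; y; z].
have [xA yA zA] : [/\ x \in [set x; y; z], y \in [set x; y; z] & z \in [set x; y; z]].
  by rewrite !inE !eqxx !orbT.
apply: (strong_on_hub (h := x)) => u; rewrite !inE -orbA => /or3P[] /eqP->.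
- exact: connect0.
- exact: connect_trans (arc _ _ Tyz yA zA) (arc _ _ Tzx zA xA).
- exact: arc.
- exact: connect0.
- exact: arc.
- exact: connect_trans (arc _ _ Txy xA yA) (arc _ _ Tyz yA zA).
Qed.

Lemma card_triangle_set x y z : triangle x y z -> #|[set x; y; z]| = 3.
Proof.
case/triangle_neq=> xy yz zx.
have -> : [set x; y; z] = [set t in [:: x; y; z]] by apply/setP=> t; rewrite !inE orbA.
by rewrite cardsE; apply/card_uniqP; rewrite /= !inE negb_or xy yz eq_sym zx.
Qed.

Lemma connect_induced_sub (A B : {set V}) x y :
  A \subset B -> connect (induced A) x y -> connect (induced B) x y.
Proof.
move=> AB; apply: connect_sub => u v /andP[/andP[Tuv uA] vA].
exact: connect_induced1 Tuv (subsetP AB u uA) (subsetP AB v vA).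
Qed.

Lemma strong_on_add (A : {set V}) y p q :
  strong_on A -> p \in A -> q \in A -> T y p -> T q y -> strong_on (y |: A).
Proof.
move=> sA pA qA Typ Tqy; have AyA : A \subset y |: A by apply: subsetUr.
have yyA : y \in y |: A by rewrite setU11.
have inyA u : u \in A -> u \in y |: A by move=> uA; rewrite setU1r.
apply: (strong_on_hub (h := p)) => u /setU1P[->|uA].
- exact: connect_induced1 Typ yyA (inyA p pA).
- exact: connect_induced_sub AyA (sA u p uA pA).
- apply: connect_trans (connect_induced_sub AyA (sA p q pA qA)) _.
  exact: connect_induced1 Tqy (inyA q qA) yyA.
- exact: connect_induced_sub AyA (sA p u pA uA).
Qed.

Lemma strong_on_detour (D : {set V}) x w d :
  d \in D -> T x w -> (forall u, u \in D -> T u x) -> (forall u, u \in D -> T w u) ->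
  strong_on (x |: (w |: D)).
Proof.
move=> dD Txw TDx TwD; set C := x |: (w |: D).
have [xC wC] : x \in C /\ w \in C by rewrite !inE !eqxx orbT.
have DC u : u \in D -> u \in C by move=> uD; rewrite !inE uD !orbT.
have arc := @connect_induced1 C.
apply: (strong_on_hub (h := x)) => u; rewrite !inE => /orP[/eqP->|/orP[/eqP->|uD]].
- exact: connect0.
- exact: connect_trans (arc _ _ (TwD d dD) wC (DC d dD)) (arc _ _ (TDx d dD) (DC d dD) xC).
- exact: arc (TDx u uD) (DC u uD) xC.
- exact: connect0.
- exact: arc.
- exact: connect_trans (arc _ _ Txw xC wC) (arc _ _ (TwD u uD) wC (DC u uD)).
Qed.

(* Each vertex of [A] outside [B] dominates [B] or is dominated by it, and an arc [x -> w] from a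
   dominated to a dominating vertex makes [x |: (w |: (B :\ p0))] strong. *)
Lemma strong_on_grow_detour (A B : {set V}) y0 :
  strong_on A -> B \subset A -> 2 <= #|B| -> y0 \in A -> y0 \notin B ->
  (forall y p q, y \in A -> y \notin B -> p \in B -> q \in B -> T y p -> ~~ T q y) ->
  exists C : {set V}, [/\ C \subset A, strong_on C & #|C| = #|B|.+1].
Proof.
move=> sA BA B2 y0A y0B noarcs.
have [p0 p0B] : exists p0, p0 \in B by apply/card_gt0P; apply: leq_trans B2.
have p0A := subsetP BA p0 p0B.
pose O := [set y in A :\: B | [forall q in B, T q y]].
have dominates y : y \in A -> y \notin B -> y \notin O -> forall q, q \in B -> T y q.
  move=> yA yB; rewrite !inE yA yB => /forall_inPn[p pB nTpy] q qB.
  have yneq t : t \in B -> y != t by move=> tB; rewrite eq_sym (memPn yB).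
  have Typ : T y p by rewrite (tournament_total (yneq p pB)) nTpy.
  by rewrite (tournament_total (yneq q qB)) (noarcs _ _ _ yA yB pB qB Typ).
have [u [z [uA _ /= uB /negPn zB Tuz]]] :=
  strong_on_exit (X := [pred t | t \notin B]) sA y0A p0A y0B (introT negPn p0B).
have uO : u \notin O.
  by rewrite inE; apply/negP=> /andP[_ /forall_inP/(_ z zB)]; rewrite tournament_asym.
have p0BO : (p0 \in B) || (p0 \in O) by rewrite p0B.
have uBO : ~~ ((u \in B) || (u \in O)) by rewrite negb_or uB uO.
have [x [w [xA wA xBO /norP[wB wO] Txw]]] :=
  strong_on_exit (X := [pred t | (t \in B) || (t \in O)]) sA p0A uA p0BO uBO.
have TwB := dominates w wA wB wO.
have xB : x \notin B by apply/negP=> /TwB; rewrite tournament_asym.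
have {xBO}xO : x \in O by move: xBO; rewrite /= (negbTE xB).
have TBx q : q \in B -> T q x by move: xO; rewrite inE => /andP[_ /forall_inP]; apply.
have [d] : exists d, d \in B :\ p0 by apply/card_gt0P; rewrite (cardsD1 p0 B) p0B in B2.
exists (x |: (w |: (B :\ p0))); split.
- by rewrite !subUset !sub1set xA wA (subset_trans (subsetDl _ _) BA).
- by apply: (strong_on_detour (d := d)) => // t /setD1P[_ tB]; [apply: TBx | apply: TwB].
- rewrite !cardsU1 !inE negb_or (tournament_neq Txw) (negbTE xB) (negbTE wB) !andbF.
  by rewrite (cardsD1 p0 B) p0B.
Qed.

Lemma strong_on_grow (A B : {set V}) :
  strong_on A -> B \subset A -> strong_on B -> 2 <= #|B| -> #|B| < #|A| ->
  exists C : {set V}, [/\ C \subset A, strong_on C & #|C| = #|B|.+1].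
Proof.
move=> sA BA sB B2 BltA.
have [_ [y0 y0A y0B]] : B \subset A /\ exists2 y0, y0 \in A & y0 \notin B.
  by apply/properP; rewrite properEcard BA.
have [|noarcs] := boolP [exists y in A :\: B, exists p in B, exists q in B, T y p && T q y].
  case/exists_inP=> y /setDP[yA yB] /exists_inP[p pB /exists_inP[q qB /andP[Typ Tqy]]].
  exists (y |: B); split; last by rewrite cardsU1 yB.
  - by rewrite subUset sub1set yA BA.
  - exact: strong_on_add sB pB qB Typ Tqy.
apply: (strong_on_grow_detour sA BA B2 y0A y0B) => y p q yA yB pB qB Typ.
apply/negP=> Tqy; case/negP: noarcs; apply/exists_inP; exists y; first by rewrite inE yA yB.
by apply/exists_inP; exists p => //; apply/exists_inP; exists q; rewrite ?Typ.
Qed.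

Lemma strong_on_subset_card (A : {set V}) m :
  strong_on A -> 3 <= m -> m <= #|A| ->
  exists B : {set V}, [/\ B \subset A, strong_on B & #|B| = m].
Proof.
move=> sA; elim: m => [//|m IH]; rewrite leq_eqVlt => /orP[/eqP <- A3|m3 mA].
  have [v vA] : exists v, v \in A by apply/card_gt0P; apply: leq_trans A3.
  have [w wA wv] := set_other vA (ltnW A3).
  have [p [q [pA qA vpq]]] := strong_on_triangle sA vA wA wv.
  exists [set v; p; q]; split.
  - by apply/subsetP=> t; rewrite !inE -orbA => /or3P[] /eqP->.
  - exact: strong_on_triangle_set.
  - exact: card_triangle_set.
have [B [BA sB Bm]] := IH m3 (ltnW mA).
have B2 : 2 <= #|B| by rewrite Bm ltnW.
have BltA : #|B| < #|A| by rewrite Bm.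
have [C [CA sC CB]] := strong_on_grow sA BA sB B2 BltA.
by exists C; rewrite CB Bm.
Qed.

Lemma strong_on_removal (A : {set V}) :
  strong_on A -> 4 <= #|A| -> exists2 v, v \in A & strong_on (A :\ v).
Proof.
move=> sA A4.
have [B [BA sB cB]] : exists B : {set V}, [/\ B \subset A, strong_on B & #|B| = #|A|.-1].
  by apply: strong_on_subset_card => //; lia.
have [_ [v vA vB]] : B \subset A /\ exists2 v, v \in A & v \notin B.
  by apply/properP; rewrite properEcard BA cB; lia.
exists v => //; suff -> : A :\ v = B by [].
have cAv : #|A :\ v| = #|A|.-1 by rewrite (cardsD1 v A) vA.
apply/eqP; rewrite eq_sym eqEcard cAv cB leqnn andbT.
by apply/subsetP=> t tB; rewrite !inE (subsetP BA) // andbT; apply: contraNneq vB => <-.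
Qed.

End Tournament.

(** * Counting colourings *)

Section Recolouring.

Variables (V : finType) (k : nat).
Local Notation colouring := {ffun V -> 'I_k}.
Implicit Types (S : {set colouring}) (c : colouring).

Definition recolour c y i : colouring := [ffun x => if x == y then i else c x].

Definition indep_at S y :=
  forall c c', (forall x, x != y -> c x = c' x) -> c \in S -> c' \in S.

Lemma card_indep_eq S y a :
  y != a -> indep_at S y -> #|S :&: [set c : colouring | c y == c a]| * k = #|S|.
Proof.
move=> ya indS; set E := S :&: _.
have recS c i : c \in S -> recolour c y i \in S by apply: indS => x xy; rewrite ffunE (negbTE xy).
have rec_y c i : recolour c y i y = i by rewrite ffunE eqxx.
have rec_a c i : recolour c y i a = c a by rewrite ffunE eq_sym (negbTE ya).
have -> : #|E| * k = #|setX E [set: 'I_k]| by rewrite cardsX cardsT card_ord.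
(* [(c, i) |-> recolour c y i] maps [E * 'I_k] bijectively onto [S]. *)
rewrite -(card_in_imset (f := fun ci => recolour ci.1 y ci.2)).
  congr #|pred_of_set _|; apply/setP => c; apply/imsetP/idP.
    by case=> -[c' i] /setXP[/setIP[c'S _] _] ->; exact: recS.
  move=> cS; exists (recolour c y (c a), c y); first by rewrite !inE recS //= rec_y rec_a eqxx.
  by apply/ffunP => x; rewrite !ffunE; case: eqP => // ->.
move=> [c i] [c' i'] /setXP[/setIP[_]] + _ /setXP[/setIP[_]] + _ /= eqcc'.
rewrite !inE => /eqP cya /eqP c'ya.
have ii' : i = i' by rewrite -(rec_y c i) eqcc' rec_y.
congr (_, _) => //; apply/ffunP => x; case: (eqVneq x y) => [->|xy].
  by rewrite cya c'ya -(rec_a c i) -(rec_a c' i') eqcc'.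
by have := congr1 (fun f : colouring => f x) eqcc'; rewrite !ffunE (negbTE xy).
Qed.

Lemma card_indep_neq S y a :
  y != a -> indep_at S y -> #|S :&: [set c : colouring | c y != c a]| * k = #|S| * k.-1.
Proof.
move=> ya indS; have := card_indep_eq ya indS.
have -> : S :&: [set c : colouring | c y != c a] = S :\: [set c : colouring | c y == c a].
  by apply/setP=> c; rewrite !inE andbC.
have cID := cardsID [set c : colouring | c y == c a] S => cE.
by rewrite -subn1 mulnBr muln1 -{1}cID mulnDl cE addKn.
Qed.

Lemma card_indep_avoid S a (A : {set V}) :
  a \notin A -> (forall y, y \in A -> indep_at S y) ->
  #|S :&: [set c : colouring | [forall y in A, c y != c a]]| * k ^ #|A| = #|S| * k.-1 ^ #|A|.
Proof.
have [m] := ubnP #|A|; elim: m A => // m IH A Am aA indS.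
have [A0|[y yA]] := set_0Vmem A.
  rewrite A0 cards0 !expn0 !muln1; congr #|pred_of_set _|.
  by apply/setP=> c; rewrite !inE; apply: andb_idr => _; apply/forall_inP=> t; rewrite inE.
set A' := A :\ y; set S' := S :&: [set c : colouring | [forall t in A', c t != c a]].
have ya : y != a by apply: contraNneq aA => <-.
have cA : #|A| = #|A'|.+1 by rewrite (cardsD1 y A) yA.
have indS' : indep_at S' y.
  move=> c c' eqcc' /setIP[cS]; rewrite !inE (indS y yA c c') //= => /forall_inP cA'.
  apply/forall_inP=> t tA'; have /setD1P[ty _] := tA'.
  by rewrite -(eqcc' t ty) -(eqcc' a); [apply: cA' | rewrite eq_sym].
have -> : S :&: [set c : colouring | [forall t in A, c t != c a]] =
          S' :&: [set c : colouring | c y != c a].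
  apply/setP=> c; rewrite !inE -andbA; congr (_ && _).
  apply/forall_inP/andP => [cavoid|[/forall_inP cA' cy] t tA].
    by split; [apply/forall_inP=> t /setD1P[_ tA]|]; apply: cavoid.
  by case: (eqVneq t y) => [->//|ty]; apply: cA'; rewrite !inE ty.
have IHA' := IH A' _ _ (fun t tA' => indS t (subsetP (subsetDl A [set y]) t tA')).
have {}IHA' : #|S'| * k ^ #|A'| = #|S| * k.-1 ^ #|A'|.
  by apply: IHA'; [rewrite -ltnS -cA | apply: contra aA; apply: (subsetP (subsetDl _ _))].
by rewrite cA !expnS mulnA (card_indep_neq ya indS') mulnAC IHA' mulnAC mulnA.
Qed.

Lemma card_colour_eq a b : b != a -> 0 < k -> #|[set c : colouring | c b == c a]| = k ^ #|V|.-1.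
Proof.
move=> ba k0; have := @card_indep_eq [set: colouring] b a ba (fun _ _ _ _ => in_setT _).
rewrite setTI cardsT card_ffun card_ord.
have := max_card (mem [set a]); rewrite cards1 => V1.
by rewrite -(prednK V1) expnSr => /eqP; rewrite eqn_mul2r gtn_eqF //= => /eqP ->.
Qed.

End Recolouring.

(** * Monochromatic triangles *)

Definition improper (V : finType) (E : rel V) k : {set {ffun V -> 'I_k}} :=
  [set c | ~~ proper_coloringb E c].

Lemma chrom_poly_improper (V : finType) (E : rel V) k :
  chrom_poly E k + #|improper E k| = k ^ #|V|.
Proof.
rewrite /chrom_poly -[k in RHS]card_ord -card_ffun -(cardsC [set c | proper_coloringb E c]).
by congr (_ + #|pred_of_set _|); apply/setP=> c; rewrite !inE.
Qed.

Section MonochromaticTriangles.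

Variables (V : finType) (T : rel V) (k : nat).
Local Notation colouring := {ffun V -> 'I_k}.

Definition monotri (A : {set V}) : {set colouring} :=
  [set c : colouring | [exists x in A, exists y in A, exists z in A,
            [&& triangle T x y z, c y == c x & c z == c x]]].

Lemma monotriP (A : {set V}) (c : colouring) :
  reflect (exists x y z, [/\ x \in A, y \in A, z \in A, triangle T x y z & c y = c x /\ c z = c x])
          (c \in monotri A).
Proof.
rewrite inE; apply: (iffP exists_inP) => [[x xA /exists_inP[y yA /exists_inP[z zA]]]|].
  by case/and3P=> xyz /eqP cy /eqP cz; exists x, y, z.
case=> x [y [z [xA yA zA xyz [cy cz]]]]; exists x => //; apply/exists_inP; exists y => //.
by apply/exists_inP; exists z; rewrite // xyz cy cz !eqxx.
Qed.

Lemma monotriS (A B : {set V}) : A \subset B -> monotri A \subset monotri B.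
Proof.
move=> AB; apply/subsetP=> c /monotriP[x [y [z [xA yA zA xyz cxyz]]]].
by apply/monotriP; exists x, y, z; rewrite !(subsetP AB).
Qed.

Lemma monotri_indep (A : {set V}) y : y \notin A -> indep_at (monotri A) y.
Proof.
move=> yA c c' eqcc' /monotriP[x [u [z [xA uA zA xuz [cu cz]]]]].
have notin_y t : t \in A -> t != y by move=> tA; apply: contraNneq yA => <-.
apply/monotriP; exists x, u, z; split=> //.
by rewrite -!eqcc' ?notin_y.
Qed.

(* [monotri (y |: A)] contains [monotri A] and the colourings making [y a b] monochromatic,
   and neither [monotri A] nor [c b == c a] depends on [c y]. *)
Lemma monotri_extend (A : {set V}) y a b :
  y \notin A -> a \in A -> b \in A -> triangle T y a b ->
  k * #|monotri A| + #|[set c : colouring | c b == c a]|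
    <= k * #|monotri (y |: A)| + #|monotri A :&: [set c : colouring | c b == c a]|.
Proof.
move=> yA aA bA yab; set B := monotri A; set Q := [set c : colouring | c b == c a].
have notin_y t : t \in A -> y != t by move=> tA; apply: contraNneq yA => ->.
have indQ : indep_at Q y.
  by move=> c c' eqcc'; rewrite !inE -!eqcc' // eq_sym notin_y.
have indBQ : indep_at (B :&: Q) y.
  move=> c c' eqcc' /setIP[cB cQ]; rewrite inE (monotri_indep yA eqcc') //.
  exact: indQ eqcc' cQ.
set M := Q :&: [set c : colouring | c y == c a].
have cM := card_indep_eq (notin_y a aA) indQ.
have cBM := card_indep_eq (notin_y a aA) indBQ.
have sub : B :|: M \subset monotri (y |: A).
  apply/subsetP=> c /setUP[cB|/setIP[cQ cya]].
    exact: subsetP (monotriS (subsetUr _ _)) c cB.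
  apply/monotriP; exists y, a, b; move: cQ cya; rewrite !inE => /eqP cb /eqP cy.
  by rewrite eqxx aA bA !orbT cb cy.
rewrite -cM -cBM -setIA !(mulnC _ k) -!mulnDr leq_mul2l -cardsUI leq_add2r.
by rewrite subset_leq_card ?orbT.
Qed.

Lemma monotri_improper : monotri [set: V] \subset improper T k.
Proof.
apply/subsetP=> c /monotriP[x [y [z [_ _ _ /and3P[Txy Tyz Tzx] [cy cz]]]]].
rewrite inE negb_forall; apply/existsP; exists (c x); rewrite negbK.
have inC u : c u = c x -> u \in [set v | c v == c x] by move=> cu; rewrite inE cu.
apply/existsP; exists x; apply/existsP; exists y; rewrite !inC // Txy /=.
by apply: (connect_trans (y := z)); apply: connect1; rewrite /= ?Tyz ?Tzx !inC.
Qed.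

End MonochromaticTriangles.

Lemma deficit_step_arith (k K B B' BQ D : nat) (b : bool) :
  0 < k -> K <= B + k * D -> k * B + K <= k * B' + BQ -> BQ + b <= B ->
  K + b <= B' + k.-1 * D.
Proof.
case: k => // k _ /= h1 h2 h3.
have key : k.+1 * K + b <= k.+1 * (B' + k * D).
  have := leq_mul (leqnn k) h1; move: h2; rewrite !mulSn !mulnDr.
  move: (k * K) (k * B) (k * B') (k * D) (k * (k * D)) => kK kB kB' kD kkD; lia.
case: b key h3 => /= key _.
  by rewrite addn1 -(ltn_pmul2l (ltn0Sn k)) -addn1.
by rewrite addn0 -(leq_pmul2l (ltn0Sn k)) -[_ * K]addn0.
Qed.

Section LowerBound.

Variables (V : finType) (T : rel V) (k : nat).
Hypotheses (tourT : is_tournament T) (k_gt0 : 0 < k).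

(* For a strong [A], at least [k ^ #|V|.-1 - deficit A] colourings have a monochromatic
   triangle in [A]; for [A = setT] this is the number of improper colourings of [D_n]. *)
Definition deficit (A : {set V}) := k ^ (#|V| - #|A|).+1 * k.-1 ^ (#|A| - 2).

Lemma monotri_step (b : bool) (A : {set V}) v p q :
  v \notin A -> p \in A -> q \in A -> triangle T v p q -> 2 <= #|A| ->
  k ^ #|V|.-1 <= #|monotri T k A| + deficit A ->
  (b -> exists2 c, c \in monotri T k A & c p != c q) ->
  k ^ #|V|.-1 + b <= #|monotri T k (v |: A)| + deficit (v |: A).
Proof.
move=> vA pA qA vpq A2 IH sep.
have [_ pq _] := triangle_neq tourT vpq; have qp : q != p by rewrite eq_sym.
have ext := monotri_extend k vA pA qA vpq; rewrite card_colour_eq // in ext.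
have AV : #|A| < #|V|.
  by have := subset_leq_card (subsetT (v |: A)); rewrite cardsU1 vA cardsT.
set D := k ^ (#|V| - #|v |: A|).+1 * k.-1 ^ (#|A| - 2).
have defA : deficit A = k * D.
  by rewrite /deficit /D cardsU1 vA mulnA -expnS; congr (_ ^ _ * _); lia.
have defvA : deficit (v |: A) = k.-1 * D.
  by rewrite /deficit /D mulnCA -expnS cardsU1 vA; congr (_ * _ ^ _); lia.
rewrite defA in IH; rewrite defvA; apply: deficit_step_arith IH ext _ => //.
case: b sep => [/(_ isT)[c cB cpq]|_]; last by rewrite addn0 subset_leq_card ?subsetIl.
rewrite addn1; apply: proper_card; apply/properP; split; first exact: subsetIl.
by exists c; rewrite // inE cB inE eq_sym.
Qed.

Lemma monotri_bound_small (A : {set V}) :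
  #|A| <= 2 -> k ^ #|V|.-1 <= #|monotri T k A| + deficit A.
Proof.
move=> A2; rewrite /deficit (_ : #|A| - 2 = 0) ?muln1; last lia.
by apply: leq_trans (leq_addl _ _); rewrite leq_pexp2l //; lia.
Qed.

Lemma monotri_lower_bound (A : {set V}) :
  strong_on T A -> k ^ #|V|.-1 <= #|monotri T k A| + deficit A.
Proof.
have [m] := ubnP #|A|; elim: m A => // m IH A Am sA.
have [A2|A3] := leqP #|A| 2; first exact: monotri_bound_small.
have [v vA IHv] : exists2 v, v \in A & k ^ #|V|.-1 <= #|monotri T k (A :\ v)| + deficit (A :\ v).
  have [A4|A3'] := leqP 4 #|A|.
    have [v vA sAv] := strong_on_removal tourT sA A4.
    by exists v => //; apply: IH sAv; rewrite (cardsD1 v A) vA in Am.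
  have [v vA] : exists v, v \in A by apply/card_gt0P; apply: leq_trans A3.
  by exists v => //; apply: monotri_bound_small; rewrite (cardsD1 v A) vA in A3'.
have [w wA wv] := set_other vA (ltnW A3).
have [p [q [pA qA vpq]]] := strong_on_triangle tourT sA vA wA wv.
have [vp _ qv] := triangle_neq tourT vpq.
rewrite -(setD1K vA) -[k ^ _]addn0.
apply: (monotri_step (b := false) _ _ _ vpq _ IHv) => //.
- by rewrite !inE eqxx.
- by rewrite !inE eq_sym vp.
- by rewrite !inE qv.
- by rewrite (cardsD1 v A) vA in A3.
Qed.

End LowerBound.

(** * Tournaments shaped like D_n *)

(* [a] and [b] play the roles of [v_n] and [v_1]. *)
Definition Dn_shape (V : finType) (T : rel V) (a b : V) :=
  [/\ T a b, forall x, x != a -> x != b -> T x a && T b x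
   & forall x y z, x != a -> y != a -> z != a -> ~~ triangle T x y z].

Section StrictBound.

Variables (V : finType) (T : rel V) (k : nat).
Hypotheses (tourT : is_tournament T) (k_gt1 : 1 < k).

Lemma monotri_separating (W : {set V}) x y z p q :
  x \in W -> y \in W -> z \in W -> triangle T x y z -> p \notin [:: x; y; z] -> q != p ->
  exists2 c, c \in monotri T k W & c p != c q.
Proof.
move=> xW yW zW xyz pxyz qp.
pose c : {ffun V -> 'I_k} := [ffun u => if u == p then Ordinal k_gt1 else Ordinal (ltnW k_gt1)].
have c_off u : u \in [:: x; y; z] -> c u = Ordinal (ltnW k_gt1).
  by move=> uxyz; rewrite ffunE; case: eqP => // up; rewrite -up uxyz in pxyz.
exists c; last by rewrite !ffunE eqxx (negbTE qp).
by apply/monotriP; exists x, y, z; rewrite !c_off ?inE ?eqxx ?orbT.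
Qed.

Lemma triangle_pair_dominated (W : {set V}) a b x :
  strong_on T W -> 1 < #|W| -> T a b ->
  (forall x y z, x \in W -> y \in W -> z \in W -> triangle T x y z ->
     (a \in [:: x; y; z]) && (b \in [:: x; y; z])) ->
  x \in W -> x != a -> x != b -> T x a && T b x.
Proof.
move=> sW W2 Tab through xW xa xb.
have [w wW wx] := set_other xW W2.
have [p [q [pW qW xpq]]] := strong_on_triangle tourT sW xW wW wx.
have /andP[] := through x p q xW pW qW xpq; rewrite !inE !(eq_sym _ x) (negbTE xa) (negbTE xb) /=.
case/and3P: xpq => Txp Tpq Tqx; case/orP=> /eqP ea /orP[]/eqP eb; subst.
- by rewrite tournament_irrefl in Tab.
- by rewrite Txp Tqx.
- by rewrite tournament_asym in Tab.
- by rewrite tournament_irrefl in Tab.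
Qed.

Lemma triangle_off_pair a b :
  T a b -> (forall x, x != a -> x != b -> T x a && T b x) -> ~ Dn_shape T a b ->
  exists x y z, [/\ triangle T x y z, [&& x != a, y != a & z != a] & [&& x != b, y != b & z != b]].
Proof.
move=> Tab dom notshape.
have [/existsP[x /existsP[y /existsP[z /and4P[xa ya za xyz]]]]|none] :=
  boolP [exists x, exists y, exists z, [&& x != a, y != a, z != a & triangle T x y z]].
  have not_b u v w : w != a -> triangle T u v w -> u != b.
    move=> wa uvw; have [_ _ wu] := triangle_neq tourT uvw.
    case/and3P: uvw => _ _; apply: contraTneq => ub; subst u.
    by have /andP[_ Tbw] := dom w wa wu; rewrite tournament_asym.
  have yzx : triangle T y z x by rewrite -triangle_rot.
  have zxy : triangle T z x y by rewrite triangle_rot.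
  exists x, y, z; split; rewrite ?xa ?ya ?za //.
  by rewrite (not_b _ _ _ za xyz) (not_b _ _ _ xa yzx) (not_b _ _ _ ya zxy).
case: notshape; split=> // x y z xa ya za; apply: contraNN none => xyz.
by apply/existsP; exists x; apply/existsP; exists y; apply/existsP; exists z; rewrite xa ya za.
Qed.

Lemma pinned_triangle_through v a b :
  T a b -> (forall x, x != a -> x != b -> T x a && T b x) -> ~ Dn_shape T a b ->
  (forall x y z, x \in [set: V] :\ v -> y \in [set: V] :\ v -> z \in [set: V] :\ v ->
     triangle T x y z -> (a \in [:: x; y; z]) && (b \in [:: x; y; z])) ->
  exists p q, [/\ triangle T v p q, (p != a) && (p != b) & (q != a) && (q != b)].
Proof.
move=> Tab dom notshape through; have inW x : x != v -> x \in [set: V] :\ v by rewrite !inE andbT.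
have [x [y [z [xyz /and3P[xa ya za] /and3P[xb yb zb]]]]] := triangle_off_pair Tab dom notshape.
have : v \in [:: x; y; z].
  apply: contraT; rewrite !inE !negb_or !(eq_sym v) => /and3P[xv yv zv].
  case/andP: (through x y z (inW x xv) (inW y yv) (inW z zv) xyz).
  by rewrite !inE => /or3P[]/eqP ea; [move: xa | move: ya | move: za]; rewrite ea eqxx.
rewrite !inE => /or3P[]/eqP->.
- by exists y, z; rewrite ya yb za zb.
- by exists z, x; rewrite -triangle_rot za zb xa xb.
- by exists x, y; rewrite triangle_rot xa xb ya yb.
Qed.

Lemma separating_triangle v a b :
  strong_on T ([set: V] :\ v) -> 1 < #|[set: V] :\ v| -> triangle T v a b -> ~ Dn_shape T a b ->
  exists p q, [/\ p \in [set: V] :\ v, q \in [set: V] :\ v, triangle T v p q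
                & exists2 c, c \in monotri T k ([set: V] :\ v) & c p != c q].
Proof.
set W := _ :\ v => sW W2 vab notshape.
have inW x : x != v -> x \in W by rewrite !inE andbT.
have [va ab bv] := triangle_neq tourT vab.
have [aW bW] : a \in W /\ b \in W by rewrite !inW // eq_sym.
have ba : b != a by rewrite eq_sym.
have [/exists_inP[x xW /exists_inP[y yW /exists_inP[z zW /andP[xyz /orP[axyz|bxyz]]]]]|through] :=
  boolP [exists x in W, exists y in W, exists z in W,
           triangle T x y z && ((a \notin [:: x; y; z]) || (b \notin [:: x; y; z]))].
- have [c cW cab] := monotri_separating (q := b) xW yW zW xyz axyz ba.
  by exists a, b; split=> //; exists c.
- have [c cW cba] := monotri_separating (q := a) xW yW zW xyz bxyz ab.
  by exists a, b; split=> //; exists c; rewrite // eq_sym.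
have {}through x y z : x \in W -> y \in W -> z \in W -> triangle T x y z ->
    (a \in [:: x; y; z]) && (b \in [:: x; y; z]).
  move=> xW yW zW xyz; apply: contraNT through; rewrite negb_and => nab.
  apply/exists_inP; exists x => //; apply/exists_inP; exists y => //.
  by apply/exists_inP; exists z; rewrite ?xyz.
have Tab : T a b by case/and3P: vab.
have dom x : x != a -> x != b -> T x a && T b x.
  move=> xa xb; have [->|xv] := eqVneq x v; first by case/and3P: vab => -> _ ->.
  exact: triangle_pair_dominated sW W2 Tab through (inW x xv) xa xb.
have [p [q [vpq /andP[pa pb] /andP[qa qb]]]] := pinned_triangle_through Tab dom notshape through.
have /andP[Tpa Tbp] := dom p pa pb.
have abp : triangle T a b p by rewrite /triangle Tab Tbp Tpa.
have [vp pq qv] := triangle_neq tourT vpq.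
have [pW qW] : p \in W /\ q \in W by rewrite !inW // eq_sym.
have qabp : q \notin [:: a; b; p] by rewrite !inE !negb_or qa qb eq_sym pq.
have [c cW cqp] := monotri_separating aW bW pW abp qabp pq.
by exists p, q; split=> //; exists c; rewrite // eq_sym.
Qed.

Lemma monotri_strict_bound :
  strong_on T [set: V] -> 4 <= #|V| -> (forall a b, ~ Dn_shape T a b) ->
  k ^ #|V|.-1 < #|monotri T k [set: V]| + k * k.-1 ^ (#|V| - 2).
Proof.
move=> sT V4 noshape; have k0 : 0 < k := ltnW k_gt1.
have T4 : 4 <= #|[set: V]| by rewrite cardsT.
have [v _ sW] := strong_on_removal tourT sT T4.
have cW : #|[set: V] :\ v| = #|V|.-1 by rewrite -cardsT (cardsD1 v [set: V]) in_setT.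
have [w _ wv] := set_other (in_setT v) (ltnW (ltnW T4)).
have [a [b [_ _ vab]]] := strong_on_triangle tourT sT (in_setT v) (in_setT w) wv.
have W2 : 1 < #|[set: V] :\ v| by rewrite cW; lia.
have [p [q [pW qW vpq sep]]] := separating_triangle sW W2 vab (noshape a b).
have vW : v \notin [set: V] :\ v by rewrite !inE eqxx.
have lowW := monotri_lower_bound tourT k0 sW.
have := monotri_step (b := true) tourT k0 vW pW qW vpq W2 lowW (fun _ => sep).
by rewrite setD1K ?in_setT // /deficit cardsT subnn expn1 addn1.
Qed.

End StrictBound.

Section ScoreOrder.

Variables (V : finType) (T : rel V) (a b : V).
Hypotheses (tourT : is_tournament T) (shapeT : Dn_shape T a b).

Definition score x := #|[set z | (z != a) && T z x]|.

Lemma Dn_shape_transitive x y z : x != a -> y != a -> z != a -> T x y -> T y z -> T x z.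
Proof.
case: shapeT => _ _ notri xa ya za Txy Tyz.
have xz : x != z by apply: contraTneq Tyz => <-; rewrite tournament_asym.
rewrite tournament_total //; apply: contra (notri x y z xa ya za) => Tzx.
by rewrite /triangle Txy Tyz.
Qed.

Lemma score_mono x y : x != a -> y != a -> T x y -> score x < score y.
Proof.
move=> xa ya Txy; apply/proper_card/properP; split.
  apply/subsetP=> z; rewrite !inE => /andP[za Tzx].
  by rewrite za (Dn_shape_transitive za xa ya).
by exists x; rewrite !inE ?xa ?Txy // tournament_irrefl ?andbF.
Qed.

Lemma score_lt x y : x != a -> y != a -> T x y = (score x < score y).
Proof.
move=> xa ya; apply/idP/idP => [|lt]; first exact: score_mono.
have [exy|xy] := eqVneq x y; first by rewrite exy ltnn in lt.
apply: contraTT lt => nTxy; rewrite -leqNgt; apply/ltnW/score_mono => //.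
by rewrite tournament_total // eq_sym.
Qed.

Lemma score_eq0 x : x != a -> (score x == 0) = (x == b).
Proof.
case: shapeT => Tab dom _ xa; rewrite cards_eq0.
have [->|xb] := eqVneq x b.
  apply/eqP/setP=> z; rewrite !inE; apply/negbTE/andP => -[za Tzb].
  have [ezb|zb] := eqVneq z b; first by rewrite ezb tournament_irrefl in Tzb.
  by case/andP: (dom z za zb) => _ /(tournament_asym tourT); rewrite Tzb.
apply/negbTE/set0Pn; exists b; rewrite inE eq_sym (tournament_neq tourT Tab).
by case/andP: (dom x xa xb).
Qed.

Lemma score_bound x : x != a -> score x < #|V|.-1.
Proof.
move=> xa; rewrite /score -(cardsC1 a); apply/proper_card/properP; split.
  by apply/subsetP=> z; rewrite !inE => /andP[].
by exists x; rewrite !inE ?xa // tournament_irrefl.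
Qed.

End ScoreOrder.

Lemma Dn_shape_iso n (T : rel 'I_n.+1) a b :
  is_tournament T -> Dn_shape T a b -> digraph_iso T (Dn n.+1).
Proof.
move=> tourT shapeT; have [Tab dom _] := shapeT.
have s_lt x : x != a -> score T a x < n.
  by move=> xa; have := score_bound tourT xa; rewrite card_ord.
have ba : b != a by rewrite eq_sym (tournament_neq tourT Tab).
have n_gt0 : 0 < n by apply: leq_ltn_trans (s_lt b ba).
(* [T - a] is transitive with source [b]: order it by in-degree and send [a] to [v_n]. *)
pose f x : 'I_n.+1 := if x == a then ord_max else inord (score T a x).
have fE x : (f x : nat) = if x == a then n else score T a x.
  by rewrite /f; case: eqP => // /eqP xa; rewrite inordK // ltnS ltnW // s_lt.
have Tax x : x != a -> T a x = (x == b).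
  move=> xa; have [->//|xb] := eqVneq x b.
  by case/andP: (dom x xa xb) => /(tournament_asym tourT).
have Txa x : x != a -> T x a = (x != b).
  move=> xa; have [->|xb] := eqVneq x b; first by rewrite (tournament_asym tourT).
  by case/andP: (dom x xa xb).
exists f; split.
  apply: injF_bij => x y /(congr1 (@nat_of_ord _)); rewrite !fE.
  case: (eqVneq x a) => [->|xa]; case: (eqVneq y a) => [->|ya] //.
  - by move=> ny; have := s_lt y ya; rewrite -ny ltnn.
  - by move=> nx; have := s_lt x xa; rewrite nx ltnn.
  move=> sxy; apply/eqP/contraT => xy.
  have [Txy|Tyx] := boolP (T x y); first by rewrite (score_lt tourT shapeT) // sxy ltnn in Txy.
  by rewrite tournament_total // (score_lt tourT shapeT) // sxy ltnn in Tyx.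
move=> x y; rewrite /Dn /= !fE.
case: (eqVneq x a) => [->|xa]; case: (eqVneq y a) => [->|ya].
- by rewrite (tournament_irrefl tourT) ltnn eqxx (gtn_eqF n_gt0).
- by rewrite Tax // ltnNge ltnW ?s_lt //= eqxx n_gt0 andbT (score_eq0 tourT shapeT).
- by rewrite Txa // s_lt //= eqxx andbT (score_eq0 tourT shapeT xa) (gtn_eqF n_gt0) andbF orbF.
- rewrite (score_lt tourT shapeT) // (ltn_eqF (s_lt x xa)) (ltn_eqF (s_lt y ya)) /= andbF.
  by case: (_ < _).
Qed.


(** * Improper colourings of D_n *)

Definition Dn_mid n : {set 'I_n.+1} := [set j : 'I_n.+1 | 0 < j < n].

Lemma Dn_class_acyclic n (C : {set 'I_n.+1}) :
  ~~ [&& ord0 \in C, ord_max \in C & [exists j in Dn_mid n, j \in C]] ->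
  ~~ has_dicycle_inb (Dn n.+1) C.
Proof.
move=> noclass; apply/existsP => -[x /existsP[y /and4P[xC yC Dxy cyx]]].
pose r (v : 'I_n.+1) : nat :=
  if (ord0 \in C) && (ord_max \in C) then nat_of_bool (val v != n) else val v.
suff incr u v : Dn n.+1 u v && (u \in C) && (v \in C) -> r u < r v.
  by move: cyx; apply/negP/(rank_acyclic incr); rewrite Dxy xC yC.
move=> /andP[/andP[Duv uC] vC]; rewrite /r; move: Duv; rewrite /Dn /=.
case: ifP => [/andP[C0 Cn]|notends].
  have ends w : w \in C -> (w == 0 :> nat) || (w == n :> nat).
    move=> wC; apply: contraR noclass; rewrite negb_or C0 Cn => /andP[w0 wn] /=.
    by apply/exists_inP; exists w; rewrite // inE lt0n w0 ltn_neqAle wn -ltnS ltn_ord.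
  case/orP: (ends u uC) => /eqP->; case/orP: (ends v vC) => /eqP->; lia.
case/orP=> [/andP[uv _]//|/and3P[/eqP un /eqP v0 _]].
have [eu ev] : u = ord_max /\ v = ord0 by split; apply: val_inj.
by move: notends; rewrite -eu -ev uC vC.
Qed.

Lemma Dn_improper n k (c : {ffun 'I_n.+1 -> 'I_k}) :
  c \in improper (Dn n.+1) k -> (c ord_max == c ord0) && [exists j in Dn_mid n, c j == c ord0].
Proof.
rewrite inE /proper_coloringb negb_forall => /existsP[i]; rewrite negbK; apply: contraTT => nc.
apply: Dn_class_acyclic; apply: contra nc; rewrite !inE => /and3P[/eqP c0 /eqP cn].
case/exists_inP=> j jM; rewrite inE => /eqP cj.
by rewrite c0 cn eqxx; apply/exists_inP; exists j; rewrite // cj.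
Qed.

Lemma card_Dn_mid n : 0 < n -> #|Dn_mid n| = n.-1.
Proof.
move=> n_gt0; have -> : Dn_mid n = ~: [set ord0; ord_max].
  apply/setP=> j; rewrite !inE negb_or -!val_eqE /= lt0n ltn_neqAle -ltnS ltn_ord andbT.
  by [].
have := cardsC [set ord0; ord_max : 'I_n.+1].
rewrite cards2 -val_eqE /= card_ord eq_sym -lt0n n_gt0.
by rewrite add2n => /succn_inj/(congr1 predn).
Qed.

Lemma card_Dn_improper n k : 0 < n -> 0 < k -> #|improper (Dn n.+1) k| + k * k.-1 ^ n.-1 <= k ^ n.
Proof.
move=> n_gt0 k_gt0.
have max0 : ord_max != ord0 :> 'I_n.+1 by rewrite -val_eqE /= -lt0n.
set Q := [set c : {ffun 'I_n.+1 -> 'I_k} | c ord_max == c ord0].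
have cQ : #|Q| = k ^ n by rewrite card_colour_eq // card_ord.
set Avoid := Q :&: [set c : {ffun 'I_n.+1 -> 'I_k} | [forall j in Dn_mid n, c j != c ord0]].
have cAvoid : #|Avoid| = k * k.-1 ^ n.-1.
  have indQ j : j \in Dn_mid n -> indep_at Q j.
    rewrite inE => /andP[j0 jn] c c' eqcc'.
    by rewrite !inE -!eqcc' // -val_eqE /= neq_ltn ?j0 ?jn ?orbT.
  have := card_indep_avoid (a := ord0) (A := Dn_mid n) _ indQ.
  have kn : k ^ n = k * k ^ n.-1 by rewrite -expnS prednK.
  rewrite inE ltnn card_Dn_mid // cQ kn mulnAC => /(_ isT)/eqP.
  by rewrite eqn_pmul2r ?expn_gt0 ?k_gt0 // => /eqP.
have sub : improper (Dn n.+1) k \subset Q :\: Avoid.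
  apply/subsetP=> c /Dn_improper /andP[c_max /exists_inP[j jM cj]].
  by rewrite !inE c_max andbT; apply/forall_inPn; exists j; rewrite ?negbK.
have := subset_leq_card sub; rewrite cardsDS ?subsetIl // cQ cAvoid.
have : #|Avoid| <= #|Q| by apply/subset_leq_card/subsetIl.
by rewrite cQ cAvoid addnC => DK; rewrite -leq_subRL.
Qed.



Lemma small_strong_tournament_iso_Dn n (T : rel 'I_n.+1) :
  n <= 2 -> is_tournament T -> strongly_connected T -> digraph_iso T (Dn n.+1).
Proof.
case: n T => [|n] T n2 tourT sT.
  exists id; split; first by exists id.
  by move=> x y; rewrite !ord1 (tournament_irrefl tourT).
have max0 : ord_max != ord0 :> 'I_n.+2 by rewrite -val_eqE.
have [a [b [_ _ vab]]] :=
  strong_on_triangle tourT (strong_onT sT) (in_setT ord0) (in_setT ord_max) max0.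
have allT : [set ord0; a; b] = [set: 'I_n.+2].
  by apply/eqP; rewrite eqEcard subsetT cardsT card_ord (card_triangle_set tourT vab).
have inT x : [|| x == ord0, x == a | x == b] by have := in_setT x; rewrite -allT !inE orbA.
have [Tva Tab Tbv] := and3P vab.
apply: (Dn_shape_iso tourT (a := a) (b := b)); split => // [x xa xb|x y z xa ya za].
  by have := inT x; rewrite (negbTE xa) (negbTE xb) !orbF => /eqP->; rewrite Tva Tbv.
apply/negP => /(triangle_neq tourT) [].
have := inT x; have := inT y; have := inT z; rewrite (negbTE xa) (negbTE ya) (negbTE za) /=.
by do 3 case/orP=> /eqP->; rewrite ?eqxx.
Qed.

Theorem mainTheorem13 (n : nat) (T : rel 'I_n) (k : nat) :
  0 < n ->
  is_tournament T ->
  strongly_connected T ->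
  ~ digraph_iso T (Dn n) ->
  1 < k ->
  chrom_poly T k < chrom_poly (Dn n) k.
Proof.
case: n T => [//|n] T _ tourT sT notiso k_gt1.
have [n_small|n_big] := leqP n 2.
  by case: notiso; apply: small_strong_tournament_iso_Dn.
have noshape a b : ~ Dn_shape T a b by move/(Dn_shape_iso tourT).
have lowT : k ^ n < #|monotri T k [set: 'I_n.+1]| + k * k.-1 ^ n.-1.
  have := monotri_strict_bound tourT k_gt1 (strong_onT sT) _ noshape.
  by rewrite card_ord subSS subn1; apply.
have upD := card_Dn_improper (ltnW (ltnW n_big)) (ltnW k_gt1).
rewrite -(ltn_add2r #|improper T k|) chrom_poly_improper -(chrom_poly_improper (Dn n.+1)).
rewrite ltn_add2l -(ltn_add2r (k * k.-1 ^ n.-1)) (leq_ltn_trans upD) // (leq_trans lowT) //.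
by rewrite leq_add2r subset_leq_card ?monotri_improper.
Qed.
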